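(* Let $X$ be a non-empty finite set and $\mathcal{P}$ a partition of $X$ such that $\mathcal{P}$ has exactly $m_i\ge 2$ blocks of size $n_i\ge 2$ for $i=1,\dots,p$ (the $n_i$ pairwise distinct), exactly one block of each of the sizes $l_1,\dots,l_q$ with each $l_i\ge 2$ (these sizes distinct from each other and from the $n_i$), and $t$ singleton blocks, and no other blocks ($p,q,t$ may be $0$). Then $$\operatorname{rank}(\Sigma(X,\mathcal{P}):S(X,\mathcal{P}))=p+q+g'(t)-1+l,$$ where $g'(0)=0$ and $g'(t)=1$ for $t\ge 1$, and $l$ is the number of values $s\ge 2$ such that $\mathcal{P}$ has a block of size $s$ but no block of size $s-1$.
   Context: $T(X,\mathcal{P})$ is the semigroup (under composition) of maps $f:X\to X$ such that for every block $P$ there is a block $Q$ with $Pf\subseteq Q$; $S(X,\mathcal{P})$ is its group of units (bijections in $T(X,\mathcal{P})$); $\Sigma(X,\mathcal{P})$ is the subsemigroup of $f\in T(X,\mathcal{P})$ whose image intersects every block. For a subsemigroup $U$ of a semigroup $V$, $\operatorname{rank}(V:U)$ is the least cardinality of a subset $W\subseteq V$ such that $U\cup W$ generates $V$ as a semigroup. *)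

From mathcomp Require Import all_boot.
Set Implicit Arguments. Unset Strict Implicit. Unset Printing Implicit Defensive.

Section Defs.
Variable X : finType.

(* maps act on the right: x (f g) = (x f) g *)
Definition compR (f g : {ffun X -> X}) : {ffun X -> X} := [ffun x => g (f x)].

Definition Tpart (P : {set {set X}}) : {set {ffun X -> X}} :=
  [set f : {ffun X -> X} | [forall B in P, exists C in P, (f @: B) \subset C]].

Definition Spart (P : {set {set X}}) : {set {ffun X -> X}} :=
  [set f : {ffun X -> X} in Tpart P | injectiveb f].

Definition Sigmapart (P : {set {set X}}) : {set {ffun X -> X}} :=
  [set f : {ffun X -> X} in Tpart P | [forall B in P, [exists x, f x \in B]]].

Inductive in_sg (A : {set {ffun X -> X}}) : {ffun X -> X} -> Prop :=
  | sg_base f : f \in A -> in_sg A f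
  | sg_comp f g : in_sg A f -> in_sg A g -> in_sg A (compR f g).

Definition generates (A V : {set {ffun X -> X}}) : Prop :=
  forall f, f \in V <-> in_sg A f.

Definition is_relrank (V U : {set {ffun X -> X}}) (r : nat) : Prop :=
  (exists2 W : {set {ffun X -> X}}, W \subset V & #|W| = r /\ generates (U :|: W) V) /\
  (forall W : {set {ffun X -> X}}, W \subset V -> generates (U :|: W) V -> r <= #|W|).

Definition nblocks (P : {set {set X}}) (s : nat) : nat := #|[set B in P | #|B| == s]|.

Definition lcount (P : {set {set X}}) : nat :=
  count (fun s => (0 < nblocks P s) && (nblocks P s.-1 == 0)) (iota 2 #|X|).
End Defs.

(* A map of [Sigmapart P] is of kind [(0, s)] if it identifies two points of a
   block of size [s], where no block has size [s - 1], and has rank [#|X| - 1];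
   it is of kind [(a, b)], for consecutive block sizes [a < b], if it sends a
   block of size [b] into one of size [a] and has rank [#|X| - (b - a)].  There
   are [l] kinds of the first sort, and one fewer than the number of block sizes
   of the second.

   Lower bound: the rank of a product is at most that of each factor, so any
   factorisation of a map of some kind over [Spart P] and a generating set
   involves a generator of the same kind, which is not a bijection; and one map
   cannot be of two kinds without losing more rank than it has lost.

   Upper bound: one map of each kind suffices.  Conjugating by bijections of
   [Spart P] yields every map identifying two points of a block, hence every
   block-preserving map; patches between two blocks, chained through
   consecutive block sizes, yield every map sending one block into another; and
   any map of [Sigmapart P] factors into such patches and a block-preserving
   map, by induction on the number of blocks it moves. *)

From mathcomp Require Import all_boot zify.
Set Implicit Arguments. Unset Strict Implicit. Unset Printing Implicit Defensive.

Section Maps.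
Variable X : finType.
Implicit Types (f g h : {ffun X -> X}) (B C : {set X}).

Lemma compRE f g x : compR f g x = g (f x).
Proof. by rewrite ffunE. Qed.

Lemma in_sg_closed (K A : {set {ffun X -> X}}) f :
  (forall g h, g \in K -> h \in K -> compR g h \in K) ->
  A \subset K -> in_sg A f -> f \in K.
Proof.
move=> closK sAK; elim=> [g gA | g h _ gK _ hK]; first exact: (subsetP sAK).
exact: closK.
Qed.

Definition imrank f := #|f @: [set: X]|.

Lemma imrank_le f : imrank f <= #|X|.
Proof. by rewrite /imrank -cardsT leq_imset_card. Qed.

Lemma imset_compR f g (A : {set X}) : compR f g @: A = g @: (f @: A).
Proof. by rewrite -imset_comp; apply: eq_imset => x; rewrite compRE. Qed.

Lemma imrank_compRl f g : imrank (compR f g) <= imrank f.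
Proof. by rewrite /imrank imset_compR leq_imset_card. Qed.

Lemma imrank_compRr f g : imrank (compR f g) <= imrank g.
Proof.
rewrite /imrank imset_compR; apply/subset_leq_card/imsetS; exact: subsetT.
Qed.

Lemma card_imset_lt (u : X -> X) (A : {set X}) x y :
  x \in A -> y \in A -> x != y -> u x = u y -> #|u @: A| < #|A|.
Proof.
move=> xA yA nxy uxy; rewrite ltn_neqAle leq_imset_card andbT.
by apply: contra nxy => /imset_injP inj; rewrite (inj x y xA yA uxy).
Qed.

Lemma imrank_compR_lt f g x y :
  x != y -> g x = g y -> x \in f @: [set: X] -> y \in f @: [set: X] ->
  imrank (compR f g) < imrank f.
Proof. by move=> nxy gxy xf yf; rewrite /imrank imset_compR (card_imset_lt xf yf). Qed.

Lemma imrank_full_inj f : imrank f = #|X| -> injective f.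
Proof.
move=> full x y; have /imset_injP inj : #|f @: [set: X]| == #|[set: X]|.
  by rewrite cardsT -full.
by apply: inj; rewrite inE.
Qed.

(* Each point lost in the image of [B0] or [B1] is lost in the whole image. *)
Lemma imrank_loss f B0 B1 : [disjoint B0 & B1] ->
  imrank f + #|B0| + #|B1| <= #|X| + #|f @: B0| + #|f @: B1|.
Proof.
move=> dis; rewrite /imrank.
have -> : [set: X] = ~: (B0 :|: B1) :|: (B0 :|: B1) by rewrite setUC setUCr.
rewrite !imsetU.
have [leU _] := leq_card_setU (f @: ~: (B0 :|: B1)) (f @: B0 :|: f @: B1).
have [leU01 _] := leq_card_setU (f @: B0) (f @: B1).
have leC := leq_imset_card f (~: (B0 :|: B1)).
have cC := cardsC (B0 :|: B1).
have cU := cardsUI B0 B1.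
move: dis; rewrite -setI_eq0 => /eqP dis; rewrite dis cards0 in cU.
lia.
Qed.

Lemma imrank_loss1 f B : imrank f + #|B| <= #|X| + #|f @: B|.
Proof.
have dis0 : [disjoint B & set0] by rewrite -setI_eq0 setI0.
by have := imrank_loss f dis0; rewrite imset0 !cards0 !addn0.
Qed.

Definition collapse (p q : X) : {ffun X -> X} := [ffun z => if z == p then q else z].

Definition transp (a b : X) : {ffun X -> X} :=
  [ffun z => if z == a then b else if z == b then a else z].

Definition patch B C (al be : X -> X) : {ffun X -> X} :=
  [ffun z => if z \in B then al z else if z \in C then be z else z].

(* Sends the [i]-th element of [B] to the [i]-th element of [C]; the default [d]
   is used past the end of [enum C]. *)
Definition enum_map (d : X) B C (z : X) := nth d (enum C) (index z (enum B)).

Lemma transpK a b : involutive (transp a b).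
Proof.
move=> z; rewrite !ffunE; case: (eqVneq z a) => [-> | na].
  by rewrite eqxx; case: eqP => // ->.
case: (eqVneq z b) => [-> | nb]; first by rewrite eqxx.
by rewrite (negbTE na) (negbTE nb).
Qed.

Lemma transpL a b : transp a b a = b.
Proof. by rewrite ffunE eqxx. Qed.

Lemma transp_id a b z : z != a -> z != b -> transp a b z = z.
Proof. by move=> na nb; rewrite ffunE (negbTE na) (negbTE nb). Qed.

Lemma patchl B C al be z : z \in B -> patch B C al be z = al z.
Proof. by move=> zB; rewrite ffunE zB. Qed.

Lemma patchr B C al be z : z \notin B -> z \in C -> patch B C al be z = be z.
Proof. by move=> zB zC; rewrite ffunE (negbTE zB) zC. Qed.

Lemma patch_id B C al be z : z \notin B -> z \notin C -> patch B C al be z = z.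
Proof. by move=> zB zC; rewrite ffunE (negbTE zB) (negbTE zC). Qed.

Lemma enum_map_mem d B C z : d \in C -> enum_map d B C z \in C.
Proof.
move=> dC; rewrite /enum_map; case: (ltnP (index z (enum B)) (size (enum C))) => h.
  by rewrite -mem_enum mem_nth.
by rewrite nth_default.
Qed.

Lemma enum_mapK d d' B C z :
  z \in B -> #|B| <= #|C| -> enum_map d' C B (enum_map d B C z) = z.
Proof.
move=> zB le; rewrite /enum_map.
have ltC : index z (enum B) < size (enum C).
  by rewrite -cardE (leq_trans _ le) // cardE index_mem mem_enum.
by rewrite index_uniq ?enum_uniq // nth_index ?mem_enum.
Qed.

Lemma enum_map_pair b c B C : b \in B -> c \in C -> #|B| <= #|C| ->
  [/\ {in B, forall x, enum_map c B C x \in C}, {in C, forall y, enum_map b C B y \in B}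
     & {in B, cancel (enum_map c B C) (enum_map b C B)}].
Proof.
move=> bB cC le; split => [x _ | y _ | x xB]; [exact: enum_map_mem.. | exact: enum_mapK].
Qed.

Lemma imrank_collapse (p q : X) : #|X| <= imrank (collapse p q) + 1.
Proof.
have : [set~ p] \subset collapse p q @: [set: X].
  apply/subsetP => z; rewrite !inE => nzp; apply/imsetP; exists z; rewrite ?inE //.
  by rewrite ffunE (negbTE nzp).
by move/subset_leq_card; rewrite cardsC1 /imrank; lia.
Qed.

Lemma neq_of_card_neq B C : #|B| != #|C| -> B != C.
Proof. by apply: contraNneq => ->. Qed.

End Maps.

Lemma witness_set (T : eqType) (U : finType) (K : seq T) (Q : T -> U -> Prop) :
  (forall i, i \in K -> exists w, Q i w) ->
  exists W : {set U}, [/\ #|W| <= size K,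
    forall i, i \in K -> exists2 w, w \in W & Q i w &
    forall w, w \in W -> exists2 i, i \in K & Q i w].
Proof.
elim: K => [|i K IH] hK; first by exists set0; split => [|//|w]; rewrite ?cards0 ?inE.
have [w Qiw] := hK i (mem_head i K).
have [W [cW hW Wh]] : exists W : {set U}, [/\ #|W| <= size K,
    forall j, j \in K -> exists2 w, w \in W & Q j w &
    forall w, w \in W -> exists2 j, j \in K & Q j w].
  by apply: IH => j jK; apply: hK; rewrite in_cons jK orbT.
exists (w |: W); split.
- by rewrite (leq_trans (leq_card_setU _ _).1) // cards1 add1n.
- move=> j; rewrite in_cons => /predU1P [-> | jK]; first by exists w; rewrite ?setU11.
  by have [w' w'W Qw'] := hW j jK; exists w'; rewrite ?setU1r.
- move=> w'; rewrite in_setU1 => /predU1P [-> | w'W].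
    by exists i; rewrite ?mem_head.
  by have [j jK Qjw'] := Wh w' w'W; exists j; rewrite ?in_cons ?jK ?orbT.
Qed.

Lemma size_le_card_witnesses (T : eqType) (U : finType) (K : seq T) (W : {set U})
    (R : T -> U -> Prop) :
  uniq K -> (forall i, i \in K -> exists2 w, w \in W & R i w) ->
  (forall i j w, i \in K -> j \in K -> R i w -> R j w -> i = j) -> size K <= #|W|.
Proof.
elim: K W => [|i K IH] W //= /andP [iK uK] hK Runiq.
have [w wW Riw] := hK i (mem_head i K).
rewrite (cardsD1 w W) wW add1n ltnS; apply: IH => // [j jK | j j' w' jK j'K]; last first.
  by apply: Runiq; rewrite in_cons ?jK ?j'K orbT.
have [w' w'W Rjw'] : exists2 w', w' \in W & R j w' by apply: hK; rewrite in_cons jK orbT.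
exists w' => //.
rewrite !inE w'W andbT; apply: contraNneq iK => ew'.
by rewrite (Runiq i j w) ?mem_head ?in_cons ?jK ?orbT // -ew'.
Qed.

Section Partition.
Variables (X : finType) (P : {set {set X}}).
Hypothesis partP : partition P [set: X].
Implicit Types (f g h w : {ffun X -> X}) (A B C D : {set X}).

Let coverP : cover P = [set: X]. Proof. by case/and3P: partP => /eqP. Qed.
Let trivP : trivIset P. Proof. by case/and3P: partP. Qed.
Let set0P : set0 \notin P. Proof. by case/and3P: partP. Qed.

Lemma pblockP x : pblock P x \in P.
Proof. by rewrite pblock_mem // coverP inE. Qed.

Lemma pblock_self x : x \in pblock P x.
Proof. by rewrite mem_pblock coverP inE. Qed.

Lemma pblockE B x : B \in P -> x \in B -> pblock P x = B.
Proof. exact: def_pblock. Qed.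

Lemma pblock_of_mem x y : y \in pblock P x -> pblock P y = pblock P x.
Proof. exact: same_pblock. Qed.

Lemma block_nonempty B : B \in P -> exists x, x \in B.
Proof.
move=> BP; have : B != set0 by apply: contraNneq set0P => <-.
by case/set0Pn => x; exists x.
Qed.

Lemma block_card_gt0 B : B \in P -> 0 < #|B|.
Proof. by case/block_nonempty => x xB; apply/card_gt0P; exists x. Qed.

Lemma mem_blockE B z : B \in P -> (z \in B) = (pblock P z == B).
Proof.
move=> BP; apply/idP/eqP => [zB | <-]; [exact: pblockE | exact: pblock_self].
Qed.

Lemma blocks_disjoint B C : B \in P -> C \in P -> B != C -> [disjoint B & C].
Proof. exact: (trivIsetP trivP). Qed.

Lemma notin_other_block B C z : B \in P -> C \in P -> B != C -> z \in B -> z \notin C.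
Proof.
move=> BP CP nBC zB; apply: contra nBC => zC.
by rewrite -(pblockE BP zB) -(pblockE CP zC).
Qed.

Lemma TpartP f :
  reflect (forall x y, pblock P x = pblock P y -> pblock P (f x) = pblock P (f y))
          (f \in Tpart P).
Proof.
rewrite inE; apply: (iffP forallP) => [fT x y exy | fhom B].
  have /existsP [C /andP [CP fxyC]] := implyP (fT (pblock P x)) (pblockP x).
  have inC z : z \in pblock P x -> pblock P (f z) = C.
    by move=> zx; apply: pblockE => //; apply/(subsetP fxyC)/imset_f.
  by rewrite (inC x) ?pblock_self // (inC y) // exy pblock_self.
apply/implyP => BP; have [x xB] := block_nonempty BP.
apply/existsP; exists (pblock P (f x)); rewrite pblockP /=.
apply/subsetP => _ /imsetP [y yB ->].
by rewrite (fhom x y) ?pblock_self // (pblockE BP xB) (pblockE BP yB).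
Qed.

Lemma Tpart_imset f B x : f \in Tpart P -> B \in P -> x \in B ->
  f @: B \subset pblock P (f x).
Proof.
move=> /TpartP fhom BP xB; apply/subsetP => _ /imsetP [y yB ->].
by rewrite (fhom x y) ?pblock_self // (pblockE BP xB) (pblockE BP yB).
Qed.

Lemma SigmapartP f :
  f \in Sigmapart P <->
  f \in Tpart P /\ (forall y, exists x, pblock P (f x) = pblock P y).
Proof.
rewrite inE; split => [/andP [-> /forallP onto] | [-> onto]].
  split => // y; have /existsP [x fxy] := implyP (onto (pblock P y)) (pblockP y).
  by exists x; apply: pblockE fxy; apply: pblockP.
apply/forallP => B; apply/implyP => BP; have [y yB] := block_nonempty BP.
have [x fxy] := onto y; apply/existsP; exists x.
by rewrite -(pblockE BP yB) -fxy pblock_self.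
Qed.

Lemma Sigmapart_Tpart f : f \in Sigmapart P -> f \in Tpart P.
Proof. by rewrite inE => /andP []. Qed.

(* The induced map on blocks is onto, hence injective, as [P] is finite. *)
Lemma Sigmapart_pblock_inj f x y :
  f \in Sigmapart P -> pblock P (f x) = pblock P (f y) -> pblock P x = pblock P y.
Proof.
move=> /SigmapartP [/TpartP fhom onto] fxy.
pose fP B := pblock P (f (odflt x [pick z in B])).
have fPE B z : B \in P -> z \in B -> fP B = pblock P (f z).
  move=> BP zB; rewrite /fP; case: pickP => [z' /= z'B | /(_ z)]; last by rewrite zB.
  by apply: fhom; rewrite (pblockE BP zB) (pblockE BP z'B).
have fP_onto : fP @: P = P.
  apply/eqP; rewrite eqEsubset; apply/andP; split.
    by apply/subsetP => _ /imsetP [B _ ->]; apply: pblockP.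
  apply/subsetP => C CP; have [c cC] := block_nonempty CP; have [z fzc] := onto c.
  apply/imsetP; exists (pblock P z); first exact: pblockP.
  by rewrite (fPE _ z (pblockP z) (pblock_self z)) fzc (pblockE CP cC).
have /imset_injP fP_inj : #|fP @: P| == #|P| by rewrite fP_onto.
apply: fP_inj; rewrite ?pblockP //.
by rewrite (fPE _ x (pblockP x) (pblock_self x)) (fPE _ y (pblockP y) (pblock_self y)).
Qed.

Lemma Spart_inj f : f \in Spart P -> injective f.
Proof. by rewrite inE => /andP [_ /injectiveP]. Qed.

Lemma Spart_intro f :
  (forall x y, pblock P x = pblock P y -> pblock P (f x) = pblock P (f y)) ->
  injective f -> f \in Spart P.
Proof.
by move=> fhom inj; rewrite inE; apply/andP; split; [apply/TpartP | apply/injectiveP].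
Qed.

Lemma Spart_Sigmapart f : f \in Spart P -> f \in Sigmapart P.
Proof.
move=> fS; apply/SigmapartP; split; first by move: fS; rewrite inE => /andP [].
by move=> y; have /codomP [x ->] := injF_onto (Spart_inj fS) y; exists x.
Qed.

Lemma Sigmapart_compR f g :
  f \in Sigmapart P -> g \in Sigmapart P -> compR f g \in Sigmapart P.
Proof.
move=> /SigmapartP [/TpartP fhom fonto] /SigmapartP [/TpartP ghom gonto].
apply/SigmapartP; split.
  by apply/TpartP => x y exy; rewrite !compRE; apply/ghom/fhom.
move=> y; have [z gzy] := gonto y; have [x fxz] := fonto z.
by exists x; rewrite compRE -gzy; apply: ghom.
Qed.

Lemma in_sg_Sigmapart (A : {set {ffun X -> X}}) f :
  A \subset Sigmapart P -> in_sg A f -> f \in Sigmapart P.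
Proof. exact/in_sg_closed/Sigmapart_compR. Qed.

(** * The lower bound *)

Definition shrinks a b f :=
  exists B C, [/\ B \in P, C \in P, b <= #|B|, #|C| <= a & f @: B \subset C].

Definition folds s f :=
  exists2 B, B \in P /\ #|B| = s & exists x y, [/\ x \in B, y \in B, x != y & f x = f y].

Lemma shrinks_card a b f : shrinks a b f ->
  exists2 B, B \in P & b <= #|B| /\ #|f @: B| <= a.
Proof.
case=> B [C [BP CP bB Ca fBC]]; exists B => //; split => //.
exact: leq_trans (subset_leq_card fBC) Ca.
Qed.

Lemma folds_card s f : folds s f -> exists2 B, B \in P & #|B| = s /\ #|f @: B| < s.
Proof.
case=> B [BP <-] [x [y [xB yB nxy fxy]]]; exists B => //; split => //.
exact: card_imset_lt xB yB nxy fxy.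
Qed.

Lemma shrinks_notin_Spart a b f : a < b -> shrinks a b f -> f \notin Spart P.
Proof.
move=> ab /shrinks_card [B _ [bB fBa]]; apply/negP => /Spart_inj inj.
by move: fBa; rewrite card_imset // leqNgt (leq_trans ab bB).
Qed.

Lemma folds_notin_Spart s f : folds s f -> f \notin Spart P.
Proof.
case=> B _ [x [y [_ _ nxy fxy]]]; apply/negP => /Spart_inj inj.
by move: nxy; rewrite (inj _ _ fxy) eqxx.
Qed.

(* The first factor sends the block either into a block of size at most [a],
   or, as no block size lies strictly between [a] and [b], into one of size at
   least [b], which the second factor must then shrink. *)
Lemma shrinks_factor (U : {set {ffun X -> X}}) a b f :
  (forall B, B \in P -> a < #|B| -> b <= #|B|) ->
  U \subset Sigmapart P -> in_sg U f -> shrinks a b f ->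
  exists2 w, w \in U & shrinks a b w /\ imrank f <= imrank w.
Proof.
move=> gap sUS; elim=> [g gU | g h gU IHg hU IHh] gh_shr; first by exists g.
have gT := Sigmapart_Tpart (in_sg_Sigmapart sUS gU).
have hT := Sigmapart_Tpart (in_sg_Sigmapart sUS hU).
case: gh_shr => B [C [BP CP bB Ca ghBC]]; have [x xB] := block_nonempty BP.
set D := pblock P (g x); have DP : D \in P by apply: pblockP.
have gBD : g @: B \subset D by apply: Tpart_imset.
have [Da | aD] := leqP #|D| a.
  have g_shr : shrinks a b g by exists B, D; split.
  have [w wU [w_shr gw]] := IHg g_shr.
  by exists w => //; split => //; apply: leq_trans (imrank_compRl g h) gw.
have hDC : h @: D \subset C.
  have hgx : h (g x) \in C by rewrite -compRE; apply/(subsetP ghBC)/imset_f.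
  by rewrite -(pblockE CP hgx); apply: Tpart_imset (pblock_self _).
have h_shr : shrinks a b h by exists D, C; split => //; apply: gap.
have [w wU [w_shr hw]] := IHh h_shr.
by exists w => //; split => //; apply: leq_trans (imrank_compRr g h) hw.
Qed.

Lemma Sigmapart_inj_imset_pblock g x : g \in Sigmapart P -> injective g ->
  g @: pblock P x = pblock P (g x).
Proof.
move=> gS ginj; apply/eqP; rewrite eqEsubset Tpart_imset ?pblockP ?pblock_self //=.
  apply/subsetP => c; have /codomP [z ->] := injF_onto ginj c => /pblock_of_mem.
  move=> /(Sigmapart_pblock_inj gS) zx.
  by rewrite imset_f // -zx pblock_self.
exact: Sigmapart_Tpart.
Qed.

(* Either the first factor already identifies the two points, or it has full
   rank, hence is bijective and maps the block onto a block of the same size,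
   on which the second factor identifies two points. *)
Lemma folds_factor (U : {set {ffun X -> X}}) s f :
  U \subset Sigmapart P -> in_sg U f -> #|X| <= imrank f + 1 -> folds s f ->
  exists2 w, w \in U & folds s w /\ #|X| <= imrank w + 1.
Proof.
move=> sUS; elim=> [g gU | g h gU IHg hU IHh] rk_gh gh_fold; first by exists g.
have gS := in_sg_Sigmapart sUS gU.
case: gh_fold => B [BP sB] [x [y [xB yB nxy]]]; rewrite !compRE => hgxy.
have [gxy | ngxy] := eqVneq (g x) (g y).
  apply: IHg; last by exists B => //; exists x, y.
  by apply: leq_trans rk_gh _; rewrite leq_add2r imrank_compRl.
have rk_g : imrank g = #|X|.
  have := imrank_compR_lt ngxy hgxy (imset_f _ (in_setT x)) (imset_f _ (in_setT y)).
  by have := imrank_le g; lia.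
have ginj := imrank_full_inj rk_g.
apply: IHh; first by apply: leq_trans rk_gh _; rewrite leq_add2r imrank_compRr.
have gB : g @: B = pblock P (g x).
  by rewrite -(pblockE BP xB) Sigmapart_inj_imset_pblock.
exists (pblock P (g x)); first by split; [apply: pblockP | rewrite -gB card_imset].
by exists (g x), (g y); rewrite -gB !imset_f.
Qed.

Definition is_size s := 0 < nblocks P s.

Lemma is_sizeP s : reflect (exists2 B, B \in P & #|B| = s) (is_size s).
Proof.
apply: (iffP card_gt0P) => [[B] | [B BP <-]]; last by exists B; rewrite inE BP eqxx.
by rewrite inE => /andP [BP /eqP <-]; exists B.
Qed.

(* The kind [(0, s)] stands for identifying two points of a block of size [s];
   the kind [(a, b)] with [0 < a] for sending a block of size [b] into one of
   the next smaller size [a]. *)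
Definition is_kind a b :=
  if a == 0 then [/\ 2 <= b, is_size b & ~~ is_size b.-1]
  else [/\ a < b, is_size a, is_size b & forall B, B \in P -> a < #|B| -> b <= #|B|].

Definition realises a b w :=
  if a == 0 then folds b w /\ #|X| <= imrank w + 1
  else shrinks a b w /\ #|X| <= imrank w + (b - a).

Definition kind_shape a b w :=
  if a == 0 then
    exists p q, [/\ p != q, pblock P p = pblock P q, #|pblock P p| = b & w = collapse p q]
  else exists A C (al be : X -> X),
    [/\ A \in P, C \in P, #|A| = a, #|C| = b &
     [/\ {in A, forall x, al x \in C}, {in C, forall y, be y \in A},
         {in A, cancel al be} & w = patch A C al be]].

Lemma lossy_blocks_eq w B0 B1 : B0 \in P -> B1 \in P ->
  #|X| + #|w @: B0| + #|w @: B1| < imrank w + #|B0| + #|B1| -> B0 = B1.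
Proof.
move=> B0P B1P; apply: contraTeq => nB01.
by rewrite -leqNgt imrank_loss // blocks_disjoint.
Qed.

(* Two kinds realised by one map would cost more rank than the map has lost. *)
Lemma realises_kind_uniq a b a' b' w :
  is_kind a b -> is_kind a' b' -> realises a b w -> realises a' b' w -> (a, b) = (a', b').
Proof.
rewrite /is_kind /realises.
have loss1 := imrank_loss1 w.
case: eqP => [-> | _]; case: eqP => [-> | _].
- move=> _ _ [/folds_card [B BP [sB wB]] rk] [/folds_card [B' B'P [sB' wB']] _].
  have eB : B = B' by apply: (lossy_blocks_eq (w := w)) => //; lia.
  by rewrite -sB -sB' eB.
- move=> [_ _ nsb] [ab' sa' _ _] [/folds_card [B BP [sB wB]] rk].
  case=> /shrinks_card [B' B'P [bB' wB']] _.
  have eB : B = B' by apply: (lossy_blocks_eq (w := w)) => //; lia.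
  have := loss1 B; rewrite eB => lB.
  have eb : b = a'.+1 by subst B'; lia.
  by move: nsb; rewrite eb sa'.
- move=> [ab sa _ _] [_ _ nsb'] [/shrinks_card [B BP [bB wB]] _].
  case=> /folds_card [B' B'P [sB' wB']] rk.
  have eB : B = B' by apply: (lossy_blocks_eq (w := w)) => //; lia.
  have := loss1 B; rewrite eB => lB.
  have eb' : b' = a.+1 by subst B'; lia.
  by move: nsb'; rewrite eb' sa.
- move=> [ab _ _ _] [ab' _ _ _] [/shrinks_card [B BP [bB wB]] rk].
  case=> /shrinks_card [B' B'P [bB' wB']] rk'.
  have eB : B = B' by apply: (lossy_blocks_eq (w := w)) => //; lia.
  have := loss1 B; subst B' => lB.
  by congr pair; lia.
Qed.

Definition fixes_blocks h := forall x, pblock P (h x) = pblock P x.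

Lemma fixes_blocks_Sigmapart h : fixes_blocks h -> h \in Sigmapart P.
Proof.
move=> hfix; apply/SigmapartP; split; last by move=> y; exists y.
by apply/TpartP => x y; rewrite !hfix.
Qed.

Section Patch.
Variables (A C : {set X}) (al be : X -> X).
Hypotheses (AP : A \in P) (CP : C \in P).
Hypotheses (alC : {in A, forall x, al x \in C}) (beA : {in C, forall y, be y \in A}).

Lemma patch_pblock z : pblock P (patch A C al be z) =
  if z \in A then C else if z \in C then A else pblock P z.
Proof.
rewrite ffunE; case: ifP => zA; first exact/(pblockE CP)/alC.
by case: ifP => zC //; apply/(pblockE AP)/beA.
Qed.

Lemma patch_Sigmapart : patch A C al be \in Sigmapart P.
Proof.
apply/SigmapartP; split.
  apply/TpartP => x y exy; rewrite !patch_pblock.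
  by rewrite !(mem_blockE _ AP) !(mem_blockE _ CP) exy.
move=> y; have [a aA] := block_nonempty AP; have [c cC] := block_nonempty CP.
have [yA | yA] := boolP (y \in A).
  exists c; rewrite patch_pblock cC (pblockE AP yA).
  by case: ifP => // cA; rewrite -(pblockE AP cA) (pblockE CP cC).
have [yC | yC] := boolP (y \in C).
  by exists a; rewrite patch_pblock aA (pblockE CP yC).
by exists y; rewrite patch_pblock (negbTE yA) (negbTE yC).
Qed.

Hypothesis nAC : A != C.

Lemma patch_shrinks : shrinks #|A| #|C| (patch A C al be).
Proof.
exists C, A; split => //; apply/subsetP => _ /imsetP [z zC ->].
by rewrite patchr ?beA // (notin_other_block CP AP) // eq_sym.
Qed.

Lemma imrank_patch : {in A, cancel al be} ->
  #|X| + #|A| <= imrank (patch A C al be) + #|C|.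
Proof.
move=> alK; have al_inj : {in A &, injective al}.
  by move=> x y xA yA /(congr1 be); rewrite !alK.
have sub : ~: C :|: al @: A \subset patch A C al be @: [set: X].
  apply/subsetP => z; rewrite !inE => /orP [zC | /imsetP [x xA ->]].
    have [zA | zA] := boolP (z \in A).
      apply/imsetP; exists (al z); rewrite ?inE // patchr ?alK ?alC //.
      by rewrite (notin_other_block CP AP) ?alC // eq_sym.
    by apply/imsetP; exists z; rewrite ?inE // patch_id.
  by apply/imsetP; exists x; rewrite ?inE // patchl.
have disj : ~: C :&: al @: A = set0.
  apply/setP => z; rewrite !inE; apply/negP => /andP [zC /imsetP [x xA ezx]].
  by move: zC; rewrite ezx alC.
move/subset_leq_card: sub; rewrite cardsU disj cards0 subn0 card_in_imset //.
by have := cardsC C; rewrite /imrank; lia.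
Qed.

End Patch.

Lemma block_two_points B : B \in P -> 2 <= #|B| ->
  exists p q, [/\ p != q, p \in B & q \in B].
Proof.
move=> BP B2; have [p pB] := block_nonempty BP.
have : ~~ (B \subset [set p]).
  by apply/negP => /subset_leq_card; rewrite cards1 => /(leq_trans B2).
by case/subsetPn => q qB; rewrite inE eq_sym => npq; exists p, q.
Qed.

Lemma kind_generator a b : is_kind a b ->
  exists w, [/\ w \in Sigmapart P, realises a b w & kind_shape a b w].
Proof.
rewrite /is_kind /realises /kind_shape; case: eqP => [_ | /eqP na].
  case=> b2 /is_sizeP [B BP sB] _; subst b.
  have [p [q [npq pB qB]]] := block_two_points BP b2.
  have [pBE qBE] := (pblockE BP pB, pblockE BP qB).
  exists (collapse p q); split.
  - apply: fixes_blocks_Sigmapart => z; rewrite ffunE; case: eqP => // ->.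
    by rewrite pBE qBE.
  - split; last exact: imrank_collapse.
    exists B => //; exists p, q; split => //.
    by rewrite !ffunE eqxx eq_sym (negbTE npq).
  - by exists p, q; rewrite pBE qBE.
case=> ab /is_sizeP [A AP sA] /is_sizeP [C CP sC] _; subst a b.
have nAC : A != C by apply: contraTneq ab => ->; rewrite ltnn.
have [a0 a0A] := block_nonempty AP; have [c0 c0C] := block_nonempty CP.
have [alC beA alK] := enum_map_pair a0A c0C (ltnW ab).
exists (patch A C (enum_map c0 A C) (enum_map a0 C A)); split.
- exact: patch_Sigmapart.
- split; first exact: patch_shrinks.
  by have := imrank_patch AP CP alC nAC alK; lia.
- by exists A, C, (enum_map c0 A C), (enum_map a0 C A).
Qed.

Lemma generators_realise (W : {set {ffun X -> X}}) a b : W \subset Sigmapart P ->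
  generates (Spart P :|: W) (Sigmapart P) -> is_kind a b ->
  exists2 w, w \in W & realises a b w.
Proof.
move=> sWS gen ki; have [g [gS gi _]] := kind_generator ki.
have sUS : Spart P :|: W \subset Sigmapart P.
  by apply/subsetP => w; rewrite inE => /orP [/Spart_Sigmapart | /(subsetP sWS)].
have g_gen := proj1 (gen g) gS.
have inW w : w \in Spart P :|: W -> w \notin Spart P -> w \in W.
  by rewrite inE => /orP [-> | //].
move: ki gi; rewrite /is_kind /realises; case: eqP => [_ _ | _].
  case=> g_fold rk; have [w wU [w_fold rkw]] := folds_factor sUS g_gen rk g_fold.
  by exists w; [exact: (inW w wU (folds_notin_Spart w_fold)) | split].
case=> ab _ _ gap [g_shr rk].
have [w wU [w_shr rkw]] := shrinks_factor gap sUS g_gen g_shr.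
exists w; first exact: (inW w wU (shrinks_notin_Spart ab w_shr)).
by split => //; apply: leq_trans rk _; rewrite leq_add2r.
Qed.

(** * Generation *)

Lemma patchC B C al be : B \in P -> C \in P -> B != C ->
  patch C B al be = patch B C be al.
Proof.
move=> BP CP nBC; apply/ffunP => z; have [zB | zB] := boolP (z \in B).
  by rewrite [LHS]patchr ?[RHS]patchl // (notin_other_block BP CP).
have [zC | zC] := boolP (z \in C); first by rewrite [LHS]patchl // [RHS]patchr.
by rewrite !patch_id.
Qed.

Lemma patchK B C al be : B \in P -> C \in P -> B != C ->
  {in B, forall x, al x \in C} -> {in C, forall y, be y \in B} ->
  {in B, cancel al be} -> {in C, cancel be al} -> involutive (patch B C al be).
Proof.
move=> BP CP nBC alC beB alK beK z; have [zB | zB] := boolP (z \in B).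
  rewrite [patch _ _ _ _ z]patchl // patchr ?alK ?alC //.
  by rewrite (notin_other_block CP BP) ?alC // eq_sym.
have [zC | zC] := boolP (z \in C); last by rewrite !patch_id.
by rewrite [patch _ _ _ _ z]patchr // patchl ?beK ?beB.
Qed.

Lemma patch_Spart B C al be : B \in P -> C \in P -> B != C ->
  {in B, forall x, al x \in C} -> {in C, forall y, be y \in B} ->
  {in B, cancel al be} -> {in C, cancel be al} -> patch B C al be \in Spart P.
Proof.
move=> BP CP nBC alC beB alK beK; apply: Spart_intro; last first.
  by apply: inv_inj; apply: patchK.
move=> x y exy; rewrite !(patch_pblock BP CP alC beB).
by rewrite !(mem_blockE _ BP) !(mem_blockE _ CP) exy.
Qed.

Lemma patch_conj B C D (f1 g1 f2 g2 : X -> X) :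
  B \in P -> C \in P -> D \in P -> B != C -> C != D -> B != D ->
  {in C, forall x, f1 x \in D} -> {in D, forall y, g1 y \in C} ->
  {in B, forall x, f2 x \in C} ->
  {in C, forall y, g2 y \in B} -> {in C, cancel f1 g1} ->
  compR (compR (patch C D f1 g1) (patch B C f2 g2)) (patch C D f1 g1) =
  patch B D (f1 \o f2) (g2 \o g1).
Proof.
move=> BP CP DP nBC nCD nBD f1D g1C f2C g2B f1K; apply/ffunP => z; rewrite !compRE.
have nCB : C != B by rewrite eq_sym.
have nDC : D != C by rewrite eq_sym.
have nDB : D != B by rewrite eq_sym.
have [zB | zB] := boolP (z \in B).
  have f2zC : f2 z \in C := f2C z zB.
  rewrite (patch_id f1 g1 (notin_other_block BP CP nBC zB)).
    by rewrite (patchl C f2 g2 zB) (patchl D f1 g1 f2zC) (patchl D _ _ zB).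
  exact: (notin_other_block BP DP nBD zB).
have [zD | zD] := boolP (z \in D).
  have zC := notin_other_block DP CP nDC zD.
  have g1zC : g1 z \in C := g1C z zD.
  have g2g1zB : g2 (g1 z) \in B := g2B _ g1zC.
  rewrite (patchr f1 g1 zC zD) (patchr f2 g2 (notin_other_block CP BP nCB g1zC) g1zC).
  rewrite (patch_id f1 g1 (notin_other_block BP CP nBC g2g1zB)).
    by rewrite (patchr _ _ zB zD).
exact: (notin_other_block BP DP nBD g2g1zB).
have [zC | zC] := boolP (z \in C); last by rewrite !patch_id.
have f1zD : f1 z \in D := f1D z zC.
rewrite (patchl D f1 g1 zC) (patch_id f2 g2 (notin_other_block DP BP nDB f1zD)).
  by rewrite (patchr f1 g1 (notin_other_block DP CP nDC f1zD) f1zD) f1K // patch_id.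
exact: (notin_other_block DP CP nDC f1zD).
Qed.

(* [z] is the one point of [C] outside the range of [al]. *)
Lemma patch_square_collapse A C al be : A \in P -> C \in P -> A != C ->
  #|C| = #|A|.+1 -> {in A, forall x, al x \in C} -> {in C, forall y, be y \in A} ->
  {in A, cancel al be} ->
  exists z q, [/\ z != q, z \in C, q \in C &
    compR (patch A C al be) (patch A C al be) = collapse z q].
Proof.
move=> AP CP nAC cC alC beA alK.
have al_inj : {in A &, injective al} by move=> x y xA yA /(congr1 be); rewrite !alK.
have alAC : al @: A \subset C by apply/subsetP => _ /imsetP [x xA ->]; apply: alC.
have : ~~ (C \subset al @: A).
  by apply/negP => /subset_leq_card; rewrite card_in_imset // cC ltnn.
case/subsetPn => z zC zal.
have alAE : al @: A = C :\ z.
  have cCz : #|C :\ z| = #|A| by move: (cardsD1 z C); rewrite zC cC add1n => -[].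
  apply/eqP; rewrite eqEcard card_in_imset // cCz leqnn andbT.
  apply/subsetP => y yal; rewrite !inE (subsetP alAC _ yal) andbT.
  by apply: contraNneq zal => <-.
have qC : al (be z) \in C by apply/alC/beA.
exists z, (al (be z)); split => //.
  by apply: contraNneq zal => ->; rewrite imset_f ?beA.
apply/ffunP => y; rewrite compRE [RHS]ffunE.
have [yA | yA] := boolP (y \in A).
  have yC := notin_other_block AP CP nAC yA.
  have alyC : al y \in C := alC y yA.
  rewrite (patchl C al be yA) (patchr al be (notin_other_block CP AP _ alyC) alyC).
    by rewrite alK //; case: eqP => // yz; move: yC; rewrite yz zC.
  by rewrite eq_sym.
have [yC | yC] := boolP (y \in C); last first.
  by rewrite !patch_id //; case: eqP => // yz; move: yC; rewrite yz zC.
have beyA : be y \in A := beA y yC.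
rewrite (patchr al be yA yC) (patchl C al be beyA); case: eqP => [-> // | /eqP nyz].
have : y \in al @: A by rewrite alAE !inE nyz.
by case/imsetP => x xA ->; rewrite alK.
Qed.

Section Generation.
Variable W : {set {ffun X -> X}}.
Hypothesis W_kinds : forall a b, is_kind a b -> exists2 w, w \in W & kind_shape a b w.
Local Notation G := (in_sg (Spart P :|: W)).

Lemma G_Spart f : f \in Spart P -> G f.
Proof. by move=> fS; apply: sg_base; rewrite inE fS. Qed.

Lemma G_W f : f \in W -> G f.
Proof. by move=> fW; apply: sg_base; rewrite inE fW orbT. Qed.

Lemma G_collapse_conj u p q : u \in Spart P -> involutive u ->
  G (collapse p q) -> G (collapse (u p) (u q)).
Proof.
move=> uS uK Gpq; have -> : collapse (u p) (u q) = compR (compR u (collapse p q)) u.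
  apply/ffunP => z; rewrite !compRE !ffunE; have [-> | nz] := eqVneq z (u p).
    by rewrite uK eqxx.
  by rewrite -(inj_eq (inv_inj uK)) uK (negbTE nz) uK.
by apply: sg_comp; [apply: sg_comp; [apply: G_Spart | ] | apply: G_Spart].
Qed.

Lemma transp_Spart a b : pblock P a = pblock P b -> transp a b \in Spart P.
Proof.
move=> eab; apply: Spart_intro; last exact: inv_inj (transpK a b).
have pbE z : pblock P (transp a b z) = pblock P z.
  rewrite ffunE; case: (eqVneq z a) => [-> // | _].
  by case: (eqVneq z b) => [-> // | _].
by move=> x y exy; rewrite !pbE.
Qed.

Lemma G_collapse_move_block p q B : p != q -> pblock P p = pblock P q ->
  B \in P -> #|B| = #|pblock P p| -> G (collapse p q) ->
  exists p' q', [/\ p' != q', p' \in B, q' \in B & G (collapse p' q')].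
Proof.
move=> npq epq BP cB Gpq; set Bp := pblock P p.
have BpP : Bp \in P by apply: pblockP.
have pBp : p \in Bp by apply: pblock_self.
have qBp : q \in Bp by rewrite /Bp epq pblock_self.
have [eB | nB] := eqVneq Bp B; first by exists p, q; rewrite -eB.
have [b bB] := block_nonempty BP.
pose u := patch Bp B (enum_map b Bp B) (enum_map p B Bp).
have [mapB mapBp K1] := enum_map_pair pBp bB (eq_leq (esym cB)).
have [_ _ K2] := enum_map_pair bB pBp (eq_leq cB).
have uK : involutive u by apply: patchK.
exists (u p), (u q); split.
- by rewrite (inj_eq (inv_inj uK)).
- by rewrite /u patchl // mapB.
- by rewrite /u patchl // mapB.
- by apply: G_collapse_conj => //; apply: patch_Spart.
Qed.

(* Two transpositions inside the block carry [p'] to [p] and [q'] to [q]. *)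
Lemma G_collapse_move_points p' q' p q : p' != q' -> p != q ->
  pblock P p' = pblock P p -> pblock P q' = pblock P p -> pblock P q = pblock P p ->
  G (collapse p' q') -> G (collapse p q).
Proof.
move=> npq' npq ep' eq' eq Gpq'.
pose t1 := transp p' p; pose r := t1 q'.
have G1 : G (collapse p r).
  rewrite -{1}(transpL p' p); apply: G_collapse_conj => //; last exact: transpK.
  exact: transp_Spart.
have nrp : r != p.
  apply: contra npq' => /eqP rp; apply/eqP; apply: (inv_inj (transpK p' p)).
  by rewrite transpL; apply: esym.
have er : pblock P r = pblock P q.
  by rewrite /r /t1 ffunE eq; case: ifP => // _; case: ifP.
have := G_collapse_conj (transp_Spart er) (transpK r q) G1.
by rewrite transpL transp_id // eq_sym.
Qed.

Lemma G_collapse_of_size s : 2 <= s -> is_size s ->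
  exists p q, [/\ p != q, pblock P p = pblock P q, #|pblock P p| = s & G (collapse p q)].
Proof.
case: s => [|[|s]] // _ ss; have [ss' | nss'] := boolP (is_size s.+1); last first.
  have [w wW] : exists2 w, w \in W & kind_shape 0 s.+2 w by apply: W_kinds.
  by case=> p [q [npq epq cp ew]]; exists p, q; split => //; rewrite -ew; apply: G_W.
have [w wW] : exists2 w, w \in W & kind_shape s.+1 s.+2 w.
  by apply: W_kinds; split => // B _; rewrite ltnS.
case=> A [C [al [be [AP CP cA cC [alC beA alK ew]]]]].
have nAC : A != C by apply/eqP => eAC; move: cA cC; rewrite eAC => ->; lia.
have [z [q [nzq zC qC wwE]]] :=
  patch_square_collapse AP CP nAC (etrans cC (congr1 S (esym cA))) alC beA alK.
exists z, q; split => //.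
- by rewrite (pblockE CP zC) (pblockE CP qC).
- by rewrite (pblockE CP zC).
- by rewrite -wwE -ew; apply: sg_comp; apply: G_W.
Qed.

Lemma G_collapse p q : p != q -> pblock P p = pblock P q -> G (collapse p q).
Proof.
move=> npq epq; set Bp := pblock P p.
have Bp2 : 2 <= #|Bp|.
  have <- : #|[set p; q]| = 2 by rewrite cards2 npq.
  apply/subset_leq_card/subsetP => z.
  have pBp : p \in Bp := pblock_self p.
  have qBp : q \in Bp by rewrite /Bp epq pblock_self.
  by rewrite !inE => /orP [] /eqP ->.
have sBp : is_size #|Bp| by apply/is_sizeP; exists Bp; rewrite ?pblockP.
have [p0 [q0 [npq0 epq0 cp0 G0]]] := G_collapse_of_size Bp2 sBp.
have [p1 [q1 [npq1 p1B q1B G1]]] :=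
  G_collapse_move_block npq0 epq0 (pblockP p) (esym cp0) G0.
apply: (G_collapse_move_points npq1 npq _ _ _ G1).
- exact: (pblock_of_mem p1B).
- exact: (pblock_of_mem q1B).
- by rewrite epq.
Qed.

(* A non-injective block-fixing map misses a point [y] of the block where it
   identifies [x] and [x']; redirecting [x] to [y] raises the rank. *)
Lemma fixes_blocks_step h x x' : fixes_blocks h -> x != x' -> h x = h x' ->
  exists h', [/\ fixes_blocks h', imrank h < imrank h' & h = compR (collapse x x') h'].
Proof.
move=> hfix nxx hxx; set Bx := pblock P x.
have Bxx' : x' \in Bx by rewrite /Bx -(hfix x) hxx hfix pblock_self.
have hBx : h @: Bx \subset Bx.
  apply/subsetP => _ /imsetP [z zB ->].
  by rewrite /Bx -(pblock_of_mem zB) -hfix pblock_self.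
have : ~~ (Bx \subset h @: Bx).
  apply/negP => /subset_leq_card; rewrite leqNgt.
  by rewrite (card_imset_lt (pblock_self x) Bxx' nxx hxx).
case/subsetPn => y yB ny.
have nyh : y \notin h @: [set: X].
  apply: contra ny => /imsetP [z _ yhz]; apply/imsetP; exists z => //.
  by rewrite /Bx -(pblock_of_mem yB) yhz hfix pblock_self.
pose h' : {ffun X -> X} := [ffun z => if z == x then y else h z].
exists h'; split.
- move=> z; rewrite ffunE; case: eqP => [-> | _]; last exact: hfix.
  exact: (pblock_of_mem yB).
- have lt_y : imrank h < #|y |: h @: [set: X]| by rewrite cardsU1 nyh.
  apply: (leq_trans lt_y); apply/subset_leq_card/subsetP => z.
  rewrite in_setU1 => /orP [/eqP -> | /imsetP [z' _ ->]].
    by apply/imsetP; exists x; rewrite ?inE // ffunE eqxx.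
  have [-> | nz'] := eqVneq z' x.
    by apply/imsetP; exists x'; rewrite ?inE // ffunE eq_sym (negbTE nxx) hxx.
  by apply/imsetP; exists z'; rewrite ?inE // ffunE (negbTE nz').
- apply/ffunP => z; rewrite compRE !ffunE; case: (eqVneq z x) => [-> | nz].
    by rewrite eq_sym (negbTE nxx).
  by rewrite (negbTE nz).
Qed.

Lemma G_fixes_blocks h : fixes_blocks h -> G h.
Proof.
have [n] := ubnP (#|X| - imrank h); elim: n => // n IH in h *; rewrite ltnS => hn hfix.
have [[x x'] /= /andP [nxx /eqP hxx] | hinj] :=
  pickP (fun xx : X * X => (xx.1 != xx.2) && (h xx.1 == h xx.2)).
  have [h' [h'fix lt ->]] := fixes_blocks_step hfix nxx hxx.
  apply: sg_comp; first by apply: G_collapse; rewrite // -hfix hxx hfix.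
  by apply: IH h'fix; have := imrank_le h'; lia.
apply/G_Spart/Spart_intro => [u v | u v huv]; first by rewrite !hfix.
by apply/eqP/contraT => nuv; have := hinj (u, v); rewrite /= nuv huv eqxx.
Qed.

Definition patchable B C := forall al be,
  {in B, forall x, al x \in C} -> {in C, forall y, be y \in B} -> G (patch B C al be).

Lemma patchable_refl B : B \in P -> patchable B B.
Proof.
move=> BP al be alB _; apply: G_fixes_blocks => z; rewrite ffunE.
case: ifP => [zB | zB]; last by rewrite zB.
by rewrite (pblockE BP zB) (pblockE BP (alB z zB)).
Qed.

(* Any patch is a given one composed with block-fixing maps on [C]. *)
Lemma patchable_of_patch B C al' be' : B \in P -> C \in P -> B != C ->
  {in B, forall x, al' x \in C} -> {in C, forall y, be' y \in B} ->
  {in B, cancel al' be'} -> G (patch B C al' be') -> patchable B C.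
Proof.
move=> BP CP nBC al'C be'B al'K G0 al be alC beB.
pose h1 : {ffun X -> X} := [ffun z => if z \in C then al' (be z) else z].
pose h2 : {ffun X -> X} := [ffun z => if z \in C then al (be' z) else z].
have fix_in_C (u : X -> X) : {in C, forall z, u z \in C} ->
    fixes_blocks [ffun z => if z \in C then u z else z].
  move=> uC z; rewrite ffunE; case: ifP => // zC.
  by rewrite (pblockE CP zC) (pblockE CP (uC z zC)).
have -> : patch B C al be = compR (compR h1 (patch B C al' be')) h2.
  apply/ffunP => z; rewrite !compRE.
  have [zB | zB] := boolP (z \in B).
    have zC := notin_other_block BP CP nBC zB.
    have al'zC : al' z \in C := al'C z zB.
    by rewrite [h1 z]ffunE (negbTE zC) !patchl // ffunE al'zC al'K.
  have [zC | zC] := boolP (z \in C); last first.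
    by rewrite [h1 z]ffunE (negbTE zC) !patch_id // ffunE (negbTE zC).
  have bezB : be z \in B := beB z zC.
  have al'bezC : al' (be z) \in C := al'C _ bezB.
  rewrite [h1 z]ffunE zC !patchr // ?al'K //; last first.
    by apply: (notin_other_block CP BP _ al'bezC); rewrite eq_sym.
  by rewrite ffunE (negbTE (notin_other_block BP CP nBC bezB)).
apply: sg_comp; first apply: sg_comp => //; apply: G_fixes_blocks; apply: fix_in_C.
- by move=> z zC; apply/al'C/beB.
- by move=> z zC; apply/alC/be'B.
Qed.

Lemma patchableC B C : B \in P -> C \in P -> patchable B C -> patchable C B.
Proof.
move=> BP CP BC al be alB beC; have [eBC | nBC] := eqVneq B C.
  by subst C; apply: BC.
by rewrite (patchC _ _ BP CP nBC); apply: BC.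
Qed.

Lemma patchable_eq_card B C : B \in P -> C \in P -> #|B| = #|C| -> patchable B C.
Proof.
move=> BP CP eBC; have [<- | nBC] := eqVneq B C; first exact: patchable_refl.
have [b bB] := block_nonempty BP; have [c cC] := block_nonempty CP.
have [mapC mapB K1] := enum_map_pair bB cC (eq_leq eBC).
have [_ _ K2] := enum_map_pair cC bB (eq_leq (esym eBC)).
apply: (patchable_of_patch BP CP nBC mapC mapB K1).
by apply: G_Spart; apply: patch_Spart.
Qed.

Lemma patchable_trans B C D : B \in P -> C \in P -> D \in P -> B != D ->
  #|B| <= #|C| -> #|C| <= #|D| -> patchable B C -> patchable C D -> patchable B D.
Proof.
move=> BP CP DP nBD BC CD GBC GCD.
have [eBC | nBC] := eqVneq B C; first by rewrite eBC.
have [eCD | nCD] := eqVneq C D; first by rewrite -eCD.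
have [b bB] := block_nonempty BP; have [c cC] := block_nonempty CP.
have [d dD] := block_nonempty DP.
have [f1D g1C f1K] := enum_map_pair cC dD CD.
have [f2C g2B f2K] := enum_map_pair bB cC BC.
apply: (patchable_of_patch (al' := enum_map d C D \o enum_map c B C)
                           (be' := enum_map b C B \o enum_map c D C)) => //.
- by move=> x xB; apply/f1D/f2C.
- by move=> y yD; apply/g2B/g1C.
- by move=> x xB /=; rewrite f1K ?f2K ?f2C.
rewrite -(patch_conj BP CP DP nBC nCD nBD f1D g1C f2C g2B f1K).
by apply: sg_comp; first apply: sg_comp; [apply: GCD | apply: GBC | apply: GCD].
Qed.

Lemma patchable_cut a b : is_kind a b -> 0 < a ->
  exists A C, [/\ A \in P, C \in P, #|A| = a, #|C| = b & patchable A C].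
Proof.
move=> kab a0; have [w wW] := W_kinds kab; rewrite /kind_shape (gtn_eqF a0).
case=> A [C [al [be [AP CP cA cC [alC beA alK ew]]]]].
have ab : a < b by move: kab; rewrite /is_kind (gtn_eqF a0); case.
have nAC : A != C by apply: neq_of_card_neq; rewrite cA cC ltn_eqF.
exists A, C; split => //; apply: (patchable_of_patch AP CP nAC alC beA alK).
by rewrite -ew; apply: G_W.
Qed.

(* Induction on the gap [#|C| - #|B|]: an intermediate block size splits the
   gap, and consecutive block sizes are linked by a generator of [W]. *)
Lemma patchable_lt B C : B \in P -> C \in P -> #|B| < #|C| -> patchable B C.
Proof.
have [n] := ubnP (#|C| - #|B|); elim: n => // n IH in B C *; rewrite ltnS => hn BP CP BC.
have [M /andP [/andP [MP BM] MC] | noM] :=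
  pickP (fun M : {set X} => (M \in P) && (#|B| < #|M|) && (#|M| < #|C|)).
  apply: (patchable_trans BP MP CP) (ltnW BM) (ltnW MC) _ _.
  - by apply: neq_of_card_neq; rewrite ltn_eqF.
  - by apply: IH => //; lia.
  - by apply: IH => //; lia.
have kBC : is_kind #|B| #|C|.
  rewrite /is_kind (gtn_eqF (block_card_gt0 BP)); split => //.
  - by apply/is_sizeP; exists B.
  - by apply/is_sizeP; exists C.
  - move=> K KP BK; rewrite leqNgt; apply: contraFN (noM K) => KC.
    by rewrite KP BK.
have [A0 [C0 [A0P C0P cA0 cC0 A0C0]]] := patchable_cut kBC (block_card_gt0 BP).
have BC0 : patchable B C0.
  apply: (patchable_trans BP A0P C0P); rewrite ?cA0 ?cC0 ?(ltnW BC) //.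
    by apply: neq_of_card_neq; rewrite cC0 ltn_eqF.
  exact: patchable_eq_card.
apply: (patchable_trans BP C0P CP); rewrite ?cC0 ?(ltnW BC) //.
  by apply: neq_of_card_neq; rewrite ltn_eqF.
by apply: patchable_eq_card; rewrite ?cC0.
Qed.

Lemma patchable_blocks B C : B \in P -> C \in P -> patchable B C.
Proof.
move=> BP CP; case: (ltngtP #|B| #|C|) => BC.
- exact: patchable_lt.
- by apply: patchableC; last apply: patchable_lt.
- exact: patchable_eq_card.
Qed.

Definition moved f := [set B in P | ~~ (f @: B \subset B)].

(* What is left of [f] after the patch in [unpatch_factor]: it fixes [C]
   pointwise and sends [B] onto [f @: C]. *)
Definition unpatch f B C (d : X) : {ffun X -> X} :=
  [ffun z => if z \in C then z else if z \in B then enum_map d B (f @: C) z else f z].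

Lemma unpatch_factor f B C d d' : B \in P -> C \in P -> B != C -> d \in B ->
  f @: B \subset C -> #|f @: C| <= #|B| ->
  f = compR (patch B C f (fun y => enum_map d (f @: C) B (f y))) (unpatch f B C d').
Proof.
move=> BP CP nBC dB fBC fCB; apply/ffunP => z; rewrite compRE.
have [zB | zB] := boolP (z \in B).
  by rewrite patchl // ffunE (subsetP fBC) ?imset_f.
have [zC | zC] := boolP (z \in C); last first.
  by rewrite patch_id // ffunE (negbTE zC) (negbTE zB).
have bB : enum_map d (f @: C) B (f z) \in B by apply: enum_map_mem.
rewrite patchr // ffunE (negbTE (notin_other_block BP CP nBC bB)) bB.
by rewrite enum_mapK ?imset_f.
Qed.

Lemma unpatch_Tpart f B C d : f \in Tpart P -> B \in P -> C \in P -> d \in f @: C ->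
  unpatch f B C d \in Tpart P.
Proof.
move=> /TpartP fhom BP CP dfC; have [c cC] := block_nonempty CP.
have fCd : f @: C \subset pblock P d.
  apply/subsetP => _ /imsetP [z zC ->]; case/imsetP: dfC => z' z'C ->.
  have ezz' : pblock P z = pblock P z' by rewrite (pblockE CP zC) (pblockE CP z'C).
  by rewrite -(fhom _ _ ezz') pblock_self.
have upE z : pblock P (unpatch f B C d z) =
    if z \in C then C else if z \in B then pblock P d else pblock P (f z).
  rewrite ffunE; case: ifP => [zC | _]; first exact: pblockE.
  case: ifP => // _; apply: pblock_of_mem; apply/(subsetP fCd)/enum_map_mem.
  exact: dfC.
apply/TpartP => x y exy; rewrite !upE !(mem_blockE _ BP) !(mem_blockE _ CP) exy.
by case: ifP => // _; case: ifP => // _; apply: fhom.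
Qed.

Lemma Sigmapart_factor_r f k g : f \in Sigmapart P -> f = compR k g ->
  g \in Tpart P -> g \in Sigmapart P.
Proof.
move=> /SigmapartP [_ fonto] fkg gT; apply/SigmapartP; split => // y.
by have [x fxy] := fonto y; exists (k x); rewrite -compRE -fkg.
Qed.

Lemma moved_unpatch f B C d : B \in moved f -> C \in P -> B != C ->
  moved (unpatch f B C d) \subset moved f :\ C.
Proof.
move=> Bm CP nBC; have BP : B \in P by move: Bm; rewrite inE => /andP [].
apply/subsetP => K; rewrite !inE => /andP [KP nfK].
have nKC : K != C.
  apply: contraNneq nfK => ->; apply/subsetP => _ /imsetP [z zC ->].
  by rewrite ffunE zC.
rewrite nKC KP /=; have [-> | nKB] := eqVneq K B.
  by move: Bm; rewrite inE => /andP [].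
suff -> : f @: K = unpatch f B C d @: K by [].
apply: eq_in_imset => z zK; rewrite ffunE (negbTE (notin_other_block KP CP nKC zK)).
by rewrite (negbTE (notin_other_block KP BP nKB zK)).
Qed.

(* Choose a moved block [B] of maximal size; [f] sends it into another moved
   block [C], no larger than [B], and [f] factors as a patch between [B] and [C]
   followed by a map moving fewer blocks. *)
Lemma moved_step f : f \in Sigmapart P -> 0 < #|moved f| ->
  exists k f', [/\ G k, f' \in Sigmapart P, #|moved f'| < #|moved f| & f = compR k f'].
Proof.
move=> fS /card_gt0P [B0 B0m]; have fT := Sigmapart_Tpart fS.
have [B Bm Bmax] := arg_maxnP (fun B : {set X} => #|B|) B0m.
have Bm' : B \in moved f := Bm.
move: (Bm'); rewrite inE => /andP [BP nfB].
have [x xB] := block_nonempty BP.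
set C := pblock P (f x); have CP : C \in P by apply: pblockP.
have fBC : f @: B \subset C by apply: Tpart_imset.
have nBC : B != C by apply: contraNneq nfB => eBC; rewrite {2}eBC.
have Cm : C \in moved f.
  rewrite inE CP; apply: contra nBC => fCC.
  have ffxC : f (f x) \in C by apply/(subsetP fCC)/imset_f/pblock_self.
  have := Sigmapart_pblock_inj fS (pblock_of_mem ffxC).
  by rewrite /C => ->; rewrite (pblockE BP xB).
have fCB : #|f @: C| <= #|B| := leq_trans (leq_imset_card _ _) (Bmax C Cm).
have ffxfC : f (f x) \in f @: C by apply/imset_f/pblock_self.
have fE := unpatch_factor (f (f x)) BP CP nBC xB fBC fCB.
exists (patch B C f (fun y => enum_map x (f @: C) B (f y))), (unpatch f B C (f (f x))).
split => //.
- apply: patchable_blocks => // [z zB | y _]; first exact/(subsetP fBC)/imset_f.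
  exact: enum_map_mem.
- by apply: (Sigmapart_factor_r fS fE); apply: unpatch_Tpart.
- apply: leq_ltn_trans (subset_leq_card (moved_unpatch _ Bm' CP nBC)) _.
  by rewrite (cardsD1 C (moved f)) Cm.
Qed.

Lemma Sigmapart_generated f : f \in Sigmapart P -> G f.
Proof.
have [n] := ubnP #|moved f|; elim: n => // n IH in f *; rewrite ltnS => hn fS.
have [m0 | mpos] := posnP #|moved f|.
  apply: G_fixes_blocks => x.
  have : pblock P x \notin moved f.
    by apply/negP => xm; move: m0; rewrite (cardD1 (pblock P x)) xm.
  rewrite inE pblockP negbK => /subsetP fxx.
  exact/pblock_of_mem/fxx/imset_f/pblock_self.
have [k [f' [Gk f'S lt ->]]] := moved_step fS mpos.
by apply: sg_comp => //; apply: IH => //; lia.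
Qed.

End Generation.

(** * Counting the kinds *)

Definition sizes := [seq s <- iota 1 #|X| | is_size s].

Definition gap_tops := [seq s <- iota 2 #|X| | is_size s && ~~ is_size s.-1].

Definition prev_size b := \max_(B in [set B in P | #|B| < b]) #|B|.

Definition kinds :=
  [seq (0, s) | s <- gap_tops] ++ [seq (prev_size b, b) | b <- behead sizes].

Lemma is_size_gt0 s : is_size s -> 0 < s.
Proof. by case/is_sizeP => B BP <-; apply: (block_card_gt0 BP). Qed.

Lemma is_size_le s : is_size s -> s <= #|X|.
Proof. by case/is_sizeP => B BP <-; apply: max_card. Qed.

Lemma mem_sizes s : (s \in sizes) = is_size s.
Proof.
rewrite mem_filter mem_iota; apply/andP/idP => [[] // | ss].
by rewrite is_size_gt0 //= add1n ltnS is_size_le.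
Qed.

Lemma sizes_sorted : sorted ltn sizes.
Proof. exact/sorted_filter/iota_ltn_sorted/ltn_trans. Qed.

Lemma lcount_gap_tops : lcount P = size gap_tops.
Proof.
by rewrite /lcount size_filter; apply: eq_count => s; rewrite /is_size eqn0Ngt.
Qed.

Lemma gap_topsP s : reflect (is_kind 0 s) (s \in gap_tops).
Proof.
rewrite /is_kind eqxx mem_filter mem_iota.
apply: (iffP idP) => [/andP [/andP [ss nss'] /andP [s2 _]] // | [s2 ss nss']].
by rewrite ss nss' s2 add2n ltnS (leq_trans (is_size_le ss)).
Qed.

Lemma mem_behead_sizes b :
  (b \in behead sizes) = is_size b && [exists B in P, #|B| < b].
Proof.
have := sizes_sorted; have := mem_sizes.
case: sizes => [|m rest] /= mem srt; first by rewrite -mem in_nil.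
have m_min : all (ltn m) rest := order_path_min ltn_trans srt.
have m_le s : is_size s -> m <= s.
  rewrite -mem in_cons => /predU1P [-> // | sr]; exact/ltnW/(allP m_min).
apply/idP/andP => [br | [sb /existsP [B /andP [BP Bb]]]].
  split; first by rewrite -mem in_cons br orbT.
  have /is_sizeP [B BP cB] : is_size m by rewrite -mem mem_head.
  by apply/existsP; exists B; rewrite BP cB; apply: (allP m_min).
have mB : m <= #|B| by apply: m_le; apply/is_sizeP; exists B.
by move: sb; rewrite -mem in_cons => /predU1P [bm | //]; move: Bb; rewrite bm ltnNge mB.
Qed.

Lemma prev_sizeP b : [exists B in P, #|B| < b] ->
  exists2 A, A \in P & #|A| = prev_size b /\ #|A| < b.
Proof.
move=> /existsP [B BPb]; have ne : 0 < #|[set B in P | #|B| < b]|.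
  by apply/card_gt0P; exists B; rewrite inE.
have [A] := eq_bigmax_cond (fun B : {set X} => #|B|) ne; rewrite inE => /andP [AP Ab] eA.
by exists A => //; rewrite /prev_size eA.
Qed.

Lemma prev_size_max b B : B \in P -> #|B| < b -> #|B| <= prev_size b.
Proof. by move=> BP Bb; apply: leq_bigmax_cond; rewrite inE BP. Qed.

Lemma kindsP a b : reflect (is_kind a b) ((a, b) \in kinds).
Proof.
rewrite mem_cat; apply: (iffP orP) => [[] /mapP [c cin [-> ->]] | kab].
- exact/gap_topsP.
- move: cin; rewrite mem_behead_sizes => /andP [sc /prev_sizeP [A AP [cA Ac]]].
  rewrite /is_kind -cA (gtn_eqF (block_card_gt0 AP)); split => //.
    by apply/is_sizeP; exists A.
  move=> K KP AK; rewrite leqNgt; apply: contraTN AK => Kc.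
  by rewrite -leqNgt cA prev_size_max.
have [a0 | a_gt0] := posnP a.
  by left; apply/mapP; exists b; [apply/gap_topsP; rewrite -a0 | rewrite a0].
right; move: kab; rewrite /is_kind (gtn_eqF a_gt0) => -[ab /is_sizeP [B BP cB] sb gap].
have exB : [exists B in P, #|B| < b] by apply/existsP; exists B; rewrite BP cB.
apply/mapP; exists b; first by rewrite mem_behead_sizes sb.
have [A AP [cA Ab]] := prev_sizeP exB.
have a_le : a <= prev_size b by rewrite -cB prev_size_max ?cB.
have le_a : prev_size b <= a.
  by rewrite -cA leqNgt; apply: contraTN Ab => aA; rewrite -leqNgt gap.
by congr pair; apply/eqP; rewrite eqn_leq a_le le_a.
Qed.

Lemma kinds_uniq : uniq kinds.
Proof.
have sizes_uniq : uniq sizes := sorted_uniq ltn_trans ltnn sizes_sorted.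
rewrite cat_uniq; apply/and3P; split.
- by rewrite map_inj_uniq ?filter_uniq ?iota_uniq // => s s' [].
- apply/hasPn => _ /mapP [b bin ->]; apply/mapP => -[s _ [p0 _]].
  move: bin; rewrite mem_behead_sizes => /andP [_ /prev_sizeP [A AP [cA _]]].
  by move: (block_card_gt0 AP); rewrite cA p0.
- rewrite map_inj_uniq => [|b b' [_ //]].
  by move: sizes_uniq; case: sizes => //= s r /andP [].
Qed.

Lemma size_kinds : size kinds = (size sizes).-1 + lcount P.
Proof. by rewrite size_cat !size_map size_behead lcount_gap_tops addnC. Qed.

Theorem Sigmapart_relrank :
  is_relrank (Sigmapart P) (Spart P) ((size sizes).-1 + lcount P).
Proof.
rewrite -size_kinds.
have lower (W : {set {ffun X -> X}}) : W \subset Sigmapart P ->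
    generates (Spart P :|: W) (Sigmapart P) -> size kinds <= #|W|.
  move=> sWS gen; apply: (size_le_card_witnesses (R := fun i w => realises i.1 i.2 w)).
  - exact: kinds_uniq.
  - by move=> [a b] /kindsP kab; apply: generators_realise.
  - move=> [a b] [a' b'] w /kindsP kab /kindsP kab'.
    exact: realises_kind_uniq.
split => //.
have kind_gen i : i \in kinds ->
    exists w, w \in Sigmapart P /\ kind_shape i.1 i.2 w.
  by case: i => a b /kindsP /kind_generator [w [wS _ ws]]; exists w.
have [W [cW W_kinds W_sub]] := witness_set kind_gen.
have sWS : W \subset Sigmapart P.
  by apply/subsetP => w /W_sub [i _ []].
have gen : generates (Spart P :|: W) (Sigmapart P).
  move=> f; split; first apply: Sigmapart_generated => // a b /kindsP.
    by case/W_kinds => w wW [_ ws]; exists w.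
  apply: in_sg_Sigmapart => //; apply/subsetP => w; rewrite inE.
  by case/orP => [/Spart_Sigmapart | /(subsetP sWS)].
by exists W => //; split => //; apply/eqP; rewrite eqn_leq cW lower.
Qed.

Lemma size_sizes (L : seq nat) :
  uniq L -> (forall s, is_size s = (s \in L)) -> size sizes = size L.
Proof.
move=> uL memL; apply/perm_size/uniq_perm => // [|s].
  exact/filter_uniq/iota_uniq.
by rewrite mem_sizes // memL.
Qed.

End Partition.

Theorem corollary4p7 (X : finType) (P : {set {set X}})
    (ns ms ls : seq nat) (t : nat) :
  0 < #|X| ->
  partition P [set: X] ->
  size ms = size ns ->
  uniq ns -> all (fun n => 2 <= n) ns -> all (fun m => 2 <= m) ms ->
  uniq ls -> all (fun l => 2 <= l) ls -> all (fun l => l \notin ns) ls ->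
  (forall i, i < size ns -> nblocks P (nth 0 ns i) = nth 0 ms i) ->
  (forall l, l \in ls -> nblocks P l = 1) ->
  nblocks P 1 = t ->
  (forall B, B \in P -> (#|B| \in ns) || (#|B| \in ls) || (#|B| == 1)) ->
  is_relrank (Sigmapart P) (Spart P)
    (size ns + size ls + (0 < t) - 1 + lcount P).
Proof.
move=> _ partP sms uns ans ams uls als lns hnb hls ht hB.
pose L := ns ++ ls ++ nseq (0 < t) 1.
have uL : uniq L.
  have not1 (s : seq nat) : all (fun n => 2 <= n) s -> ~~ has (mem s) (nseq (0 < t) 1).
    by move=> s2; apply/hasPn => _ /nseqP [-> _]; apply/negP => /(allP s2).
  rewrite /L !cat_uniq has_cat negb_or uns uls !not1 //=.
  by rewrite andbT; apply/andP; split; [apply/hasPn => l /(allP lns) | case: (0 < t)].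
have memL s : is_size P s = (s \in L).
  rewrite /L !mem_cat; apply/idP/idP.
    case/is_sizeP => B BP <-.
    case/orP: (hB B BP) => [/orP [-> | ->] | /eqP cB]; rewrite ?orbT //.
    have n1 : 0 < nblocks P 1 by apply/card_gt0P; exists B; rewrite inE BP cB.
    by rewrite cB mem_nseq eqxx lt0b -ht n1 !orbT.
  case/or3P => [sn | sl | /nseqP [-> t0]]; rewrite /is_size.
  - have si : index s ns < size ns by rewrite index_mem.
    rewrite -(nth_index 0 sn) hnb //; apply: leq_trans (allP ams _ (mem_nth 0 _)) => //.
    by rewrite sms.
  - by rewrite hls.
  - by rewrite ht; case: (0 < t) t0.
rewrite -addnA -(size_nseq (0 < t) 1) -!size_cat subn1 -(size_sizes partP uL memL).
exact: Sigmapart_relrank.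
Qed.
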